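(* Let $\mathcal{P}=\{\mathsf{R}\}$ with $\mathrm{ar}(\mathsf{R})=1$ and $[\![\mathsf{R}]\!]\subseteq\mathbb{N}$ rich. Let $n\in\mathbb{N}$ and let $\psi\in\mathrm{FOC}(\mathcal{P}\cup\{\mathsf{P}_\exists\})[\sigma_{\mathrm{tree}}]$ be a linear hnf-sentence such that for all $\mathcal{T}_n$-forests $\mathcal{F}$ we have $\mathcal{F}\models\psi\iff P_{[\![\mathsf{R}]\!]}(\mathcal{F})$. Then the number of distinct atomic numerical oc-type conditions of the form $\mathsf{R}(t)$ in $\psi$ is at least the number of non-empty sets $B\subseteq\mu(\mathcal{T}_n)$.
   Context: $\sigma_{\mathrm{tree}}=\{E_0,E_1,X\}$ with $E_0,E_1$ binary, $X$ unary. $\mathcal{T}_n$ is the set of all structures $T=(D,E_0,E_1,X)$ where $D$ is the set of binary words of length at most $2^n$, $E_b=\{(w,wb):wb\in D\}$ for $b\in\{0,1\}$, and $X\subseteq D$ arbitrary. $T$ is marked if the empty word $\varepsilon\in X$, unmarked otherwise; $\mu(T)$ is $T$ with $X$ replaced by $X\cup\{\varepsilon\}$, $\mu(\mathcal{T}_n)=\{\mu(T):T\in\mathcal{T}_n\}$. A $\mathcal{T}_n$-forest is a disjoint union of finitely many copies of trees from $\mathcal{T}_n$. For $R\subseteq\mathbb{N}$, $P_R(\mathcal{F})$ is the property: the number of unmarked trees $T$ (counted with multiplicity of copies) in $\mathcal{F}$ such that $\mu(T)$ also appears in $\mathcal{F}$ belongs to $R$. A set $R\subseteq\mathbb{N}$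 is rich if for all $s,u,v\in\mathbb{N}$, $\bar a_0\in\{0,1\}^s\setminus\{\bar0\}$, $\bar a_1,\dots,\bar a_u\in\mathbb{N}^s$, $c_1,\dots,c_u\in\mathbb{N}$ with $(\bar a_0,0)\ne(\bar a_i,c_i)$ for all $i$, there exist $\bar x,\bar y\in(v+\mathbb{N})^s$ with $\bar a_0^\top\bar x\in R\iff\bar a_0^\top\bar y\notin R$ and $\bar a_i^\top\bar x-c_i\in R\iff\bar a_i^\top\bar y-c_i\in R$ for all $i\in\{1,\dots,u\}$. $\mathsf{P}_\exists$ is the unary predicate with semantics $\{1,2,\dots\}$. $\mathrm{FOC}(\mathcal{Q})[\sigma]$: formulas and counting terms built from atomic first-order formulas, $\neg,\vee$, $\exists y$, $\mathsf{P}(t_1,\dots,t_m)$ (true iff the values of the counting terms lie in $[\![\mathsf{P}]\!]$), counting terms $\#\bar y.\varphi$ (number of tuples satisfying $\varphi$), integers, $+$, $\cdot$. A counting term is linear if it is an integer $i\in\mathbb{N}$ or of the form $\sum_{j=1}^m b_j\cdot\#(y).\varphi_j-b_0$ with $b_0,\dots,b_m\in\mathbb{N}$; a formula is linear if it only uses linear counting terms. An $r$-type with one centre is a structure with a distinguished element such that every element is within Gaifman distance $r$ of it (Gaifman graph: edges between distinct elements occurring together in a tuple); $\mathrm{sph}_\tau(y)$ is a first-order formula stating that the substructure induced on the elements within distance $r$ of $y$, centred at $y$, is isomorphic to $\tau$. Basic counting terms are $\#(y).\mathrm{sph}_\tau(y)$; simple counting terms are integer polynomials in them; atomic numerical oc-type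 conditions are $\mathsf{P}(t_1,\dots,t_m)$ with $\mathsf{P}\in\mathcal{P}\cup\{\mathsf{P}_\exists\}$ and simple counting terms $t_i$; a hnf-sentence of $\mathrm{FOC}(\mathcal{P}\cup\{\mathsf{P}_\exists\})$ is a Boolean combination of atomic numerical oc-type conditions. The number of distinct atomic numerical oc-type conditions of the form $\mathsf{R}(t)$ in $\psi$ is the number of distinct such conditions $\psi$ is a Boolean combination of. *)

From HB Require Import structures.
From mathcomp Require Import all_boot all_order all_algebra.
Set Implicit Arguments. Unset Strict Implicit. Unset Printing Implicit Defensive.
Import Order.TTheory GRing.Theory Num.Theory.

Record sstruct := SStruct {
  sV : finType;
  sE0 : rel sV;
  sE1 : rel sV;
  sX : pred sV }.

Definition gadj (A : sstruct) (x z : sV A) : bool :=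
  (x != z) && [|| sE0 x z, sE0 z x, sE1 x z | sE1 z x].

Fixpoint ball (A : sstruct) (r : nat) (y : sV A) : {set sV A} :=
  match r with
  | 0 => [set y]
  | r'.+1 => ball r' y :|: [set z | [exists x in ball r' y, gadj x z]]
  end.

(* Types with one centre (syntactic objects): a finite structure on    *)
(* 'I_k with a distinguished element (the centre).                    *)
Definition otdata (k : nat) : eqType :=
  ('I_k * {set 'I_k * 'I_k} * {set 'I_k * 'I_k} * {set 'I_k})%type.
Definition otype : eqType := {k : nat & otdata k}.

Definition ot_k (t : otype) : nat := tag t.
Definition ot_c (t : otype) : 'I_(ot_k t) := (tagged t).1.1.1.
Definition ot_E0 (t : otype) : {set 'I_(ot_k t) * 'I_(ot_k t)} := (tagged t).1.1.2.
Definition ot_E1 (t : otype) : {set 'I_(ot_k t) * 'I_(ot_k t)} := (tagged t).1.2.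
Definition ot_X (t : otype) : {set 'I_(ot_k t)} := (tagged t).2.

Definition ot_struct (t : otype) : sstruct :=
  @SStruct 'I_(ot_k t) (fun u v => (u, v) \in ot_E0 t)
           (fun u v => (u, v) \in ot_E1 t) (fun u => u \in ot_X t).

Definition is_rtype (r : nat) (t : otype) : bool :=
  ball (A := ot_struct t) r (ot_c t) == setT.

(* sph_{r,t}(y): the substructure of A induced on the r-ball around y,
   centred at y, is isomorphic to t (as centred structures). *)
Definition sph (A : sstruct) (r : nat) (t : otype) (y : sV A) : bool :=
  [exists f : {ffun 'I_(ot_k t) -> sV A},
    [&& injectiveb f, f (ot_c t) == y,
        [forall z, (z \in ball r y) == (z \in codom f)],
        [forall u, forall v, sE0 (f u) (f v) == ((u, v) \in ot_E0 t)],
        [forall u, forall v, sE1 (f u) (f v) == ((u, v) \in ot_E1 t)] &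
        [forall u, sX (f u) == (u \in ot_X t)]]].

Definition bcount (A : sstruct) (r : nat) (t : otype) : nat :=
  #|[set y : sV A | sph r t y]|.

(* Linear counting terms whose basic terms are #(y).sph_{r,t}(y):
   LConst i            ==  the integer i in N
   LSum b0 [:: (b_1,(r_1,t_1)); ...; (b_m,(r_m,t_m))]
                       ==  sum_j b_j * #(y).sph_{r_j,t_j}(y) - b0           *)
Inductive lterm :=
| LConst of nat
| LSum of nat & seq (nat * (nat * otype)).

Definition lterm_enc (t : lterm) : nat + nat * seq (nat * (nat * otype)) :=
  match t with LConst i => inl i | LSum b0 l => inr (b0, l) end.
Definition lterm_dec (e : nat + nat * seq (nat * (nat * otype))) : lterm :=
  match e with inl i => LConst i | inr (b0, l) => LSum b0 l end.
Lemma lterm_encK : cancel lterm_enc lterm_dec. Proof. by case. Qed.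
HB.instance Definition _ := Equality.copy lterm (can_type lterm_encK).

Inductive atom :=
| AR of lterm
| AEx of lterm.

Inductive hnf :=
| HAtom of atom
| HNot of hnf
| HOr of hnf & hnf.

Definition lterm_wf (t : lterm) : bool :=
  match t with
  | LConst _ => true
  | LSum _ l => all (fun p => is_rtype p.2.1 p.2.2) l
  end.
Definition atom_wf (a : atom) : bool :=
  match a with AR t => lterm_wf t | AEx t => lterm_wf t end.
Fixpoint hnf_wf (h : hnf) : bool :=
  match h with
  | HAtom a => atom_wf a
  | HNot h' => hnf_wf h'
  | HOr h1 h2 => hnf_wf h1 && hnf_wf h2
  end.

Fixpoint R_atoms (h : hnf) : seq lterm :=
  match h with
  | HAtom (AR t) => [:: t]
  | HAtom (AEx _) => [::]
  | HNot h' => R_atoms h'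
  | HOr h1 h2 => R_atoms h1 ++ R_atoms h2
  end.

Definition num_R_atoms (h : hnf) : nat := size (undup (R_atoms h)).

Definition inR (R : nat -> Prop) (z : int) : Prop :=
  match z with Posz m => R m | Negz _ => False end.

Definition lterm_val (A : sstruct) (t : lterm) : int :=
  match t with
  | LConst i => i%:Z
  | LSum b0 l => (\sum_(p <- l) (p.1 * bcount A p.2.1 p.2.2)%N)%:Z - b0%:Z
  end%R.

Definition atom_sat (R : nat -> Prop) (A : sstruct) (a : atom) : Prop :=
  match a with
  | AR t => inR R (lterm_val A t)
  | AEx t => (0 < lterm_val A t)%R
  end.

Fixpoint hnf_sat (R : nat -> Prop) (A : sstruct) (h : hnf) : Prop :=
  match h with
  | HAtom a => atom_sat R A a
  | HNot h' => ~ hnf_sat R A h'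
  | HOr h1 h2 => hnf_sat R A h1 \/ hnf_sat R A h2
  end.

Definition dotn (s : nat) (a x : 'I_s -> nat) : nat := \sum_(k < s) a k * x k.

Definition rich (R : nat -> Prop) : Prop :=
  forall (s u v : nat) (a0 : 'I_s -> nat) (a : 'I_u -> 'I_s -> nat)
         (c : 'I_u -> nat),
    (forall k, a0 k <= 1) -> (exists k, a0 k != 0) ->
    (forall i, ~ ((forall k, a i k = a0 k) /\ c i = 0)) ->
    exists x y : 'I_s -> nat,
      (forall k, v <= x k /\ v <= y k) /\
      (R (dotn a0 x) <-> ~ R (dotn a0 y)) /\
      (forall i, inR R ((dotn (a i) x)%:Z - (c i)%:Z)%R <->
                 inR R ((dotn (a i) y)%:Z - (c i)%:Z)%R).

Fixpoint words_eq (m : nat) : seq (seq bool) :=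
  match m with
  | 0 => [:: [::]]
  | m'.+1 => [seq b :: w | b <- [:: false; true], w <- words_eq m']
  end.
Definition words_le (L : nat) : seq (seq bool) :=
  flatten [seq words_eq m | m <- iota 0 L.+1].

Definition Dom (n : nat) : finType := seq_sub (words_le (2 ^ n)).

(* A tree T in T_n is determined by its set X subseteq D *)
Definition tree (n : nat) : finType := {set Dom n}.

Definition marked (n : nat) (X : tree n) : bool :=
  [exists w in X, ssval w == [::]].
Definition mu (n : nat) (X : tree n) : tree n :=
  X :|: [set w | ssval w == [::]].

(* the T_n-forest consisting of one copy of each tree of the list s
   (with multiplicity): universe 'I_(size s) * D, with
   E_b = {((i,w),(i,wb))}, X = {(i,w) | w in X of the i-th tree} *)
Definition forest (n : nat) (s : seq (tree n)) : sstruct :=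
  @SStruct ('I_(size s) * Dom n)%type
    (fun p q => (p.1 == q.1) && (ssval q.2 == rcons (ssval p.2) false))
    (fun p q => (p.1 == q.1) && (ssval q.2 == rcons (ssval p.2) true))
    (fun p => p.2 \in nth set0 s p.1).

Definition P_R (R : nat -> Prop) (n : nat) (s : seq (tree n)) : Prop :=
  R (count (fun X => ~~ marked X && (mu X \in s)) s).

From HB Require Import structures.
From mathcomp Require Import all_boot all_order all_algebra.
Set Implicit Arguments. Unset Strict Implicit. Unset Printing Implicit Defensive.
Import Order.TTheory GRing.Theory Num.Theory.

(* Fix a nonempty set B of marked trees and consider the forests made of x_T
   copies of each tree T that is in B or unmarked.  A tree is a union of
   Gaifman components of such a forest, so every linear counting term of psi
   evaluates to a linear form in x minus a constant, every P_exists-atom is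
   constant once all x_T are large, and P_R is R applied to the 0/1 form
   counting the unmarked T with mu(T) in B.  Richness of R then forces psi to
   contain an atom R(t) whose form is exactly this one, with offset 0.  Such a
   term t determines B, so distinct sets B need distinct R-atoms. *)

Definition sph_iso (A : sstruct) (r : nat) (t : otype) (y : sV A)
    (f : {ffun 'I_(ot_k t) -> sV A}) : bool :=
  [&& injectiveb f, f (ot_c t) == y,
      [forall z, (z \in ball r y) == (z \in codom f)],
      [forall u, forall v, sE0 (f u) (f v) == ((u, v) \in ot_E0 t)],
      [forall u, forall v, sE1 (f u) (f v) == ((u, v) \in ot_E1 t)] &
      [forall u, sX (f u) == (u \in ot_X t)]].
Arguments sph_iso {A} r t y f.

Lemma sphE (A : sstruct) r t (y : sV A) : sph r t y = [exists f, sph_iso r t y f].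
Proof. by []. Qed.

Section ClosedEmbedding.
Variables (A B : sstruct) (phi : sV A -> sV B).
Hypotheses (phi_inj : injective phi)
  (phiE0 : forall x y, sE0 (phi x) (phi y) = sE0 x y)
  (phiE1 : forall x y, sE1 (phi x) (phi y) = sE1 x y)
  (phiX : forall x, sX (phi x) = sX x)
  (phi_closed : forall x z, gadj (phi x) z -> z \in codom phi).

Lemma gadj_emb x z : gadj (phi x) (phi z) = gadj x z.
Proof. by rewrite /gadj (inj_eq phi_inj) !phiE0 !phiE1. Qed.

Lemma ball_emb r y : ball r (phi y) = phi @: ball r y.
Proof.
elim: r => [|r IH] /=; first by rewrite imset_set1.
rewrite IH imsetU; congr (_ :|: _); apply/setP => z; rewrite inE.
apply/existsP/imsetP => [[_ /andP[/imsetP[x xin ->] adj]] | [z' + ->]].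
- have /codomP[z' zE] := phi_closed adj; rewrite zE in adj *.
  by exists z'; rewrite // inE; apply/existsP; exists x; rewrite xin -gadj_emb.
- rewrite inE => /existsP[x /andP[xin adj]].
  by exists (phi x); rewrite imset_f ?gadj_emb.
Qed.

Lemma codom_emb k (f : {ffun 'I_k -> sV A}) z :
  (phi z \in codom [ffun u => phi (f u)]) = (z \in codom f).
Proof.
apply/codomP/codomP => [[u]|[u ->]]; last by exists u; rewrite ffunE.
by rewrite ffunE => /phi_inj ->; exists u.
Qed.

Lemma sph_iso_emb r t y (f : {ffun 'I_(ot_k t) -> sV A}) :
  sph_iso r t (phi y) [ffun u => phi (f u)] = sph_iso r t y f.
Proof.
rewrite /sph_iso ffunE (inj_eq phi_inj); congr [&& _, _, _, _, _ & _].
- apply/injectiveP/injectiveP => f_inj u v.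
    by move=> fuv; apply: f_inj; rewrite !ffunE fuv.
  by rewrite !ffunE => /phi_inj; apply: f_inj.
- rewrite ball_emb; apply/forallP/forallP => ball_f z.
    by rewrite -(mem_imset _ _ phi_inj) -codom_emb; apply: ball_f.
  have [/codomP[x ->]|z_out] := boolP (z \in codom phi).
    by rewrite mem_imset // codom_emb; apply: ball_f.
  have z_notin_ball : z \notin phi @: ball r y.
    by apply: contra z_out => /imsetP[x _ ->]; apply: codom_f.
  have z_notin_img : z \notin codom [ffun u => phi (f u)].
    by apply: contra z_out => /codomP[u ->]; rewrite ffunE codom_f.
  by rewrite (negbTE z_notin_ball) (negbTE z_notin_img).
- by apply: eq_forallb => u; apply: eq_forallb => v; rewrite !ffunE phiE0.
- by apply: eq_forallb => u; apply: eq_forallb => v; rewrite !ffunE phiE1.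
- by apply: eq_forallb => u; rewrite ffunE phiX.
Qed.

Lemma sph_emb r t y : sph r t (phi y) = sph r t y.
Proof.
rewrite !sphE; apply/existsP/existsP => [[g iso_g]|[f iso_f]]; last first.
  by exists [ffun u => phi (f u)]; rewrite sph_iso_emb.
have g_in_phi u : exists x, g u = phi x.
  case/andP: iso_g => _ /and5P[_ /forallP ball_g _ _ _].
  have := codom_f g u; rewrite -(eqP (ball_g _)) ball_emb => /imsetP[x _ ->].
  by exists x.
have [f gE] := fin_all_exists g_in_phi.
exists [ffun u => f u]; rewrite -sph_iso_emb.
by congr sph_iso: iso_g; apply/ffunP => u; rewrite !ffunE gE.
Qed.

End ClosedEmbedding.

Section MultisetSeq.
Variables (I : finType) (T : eqType) (f : I -> T).

Definition mset_seq (x : I -> nat) : seq T :=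
  flatten [seq nseq (x k) (f k) | k <- index_enum I].

Lemma big_mset_seq x (F : T -> nat) :
  \sum_(Y <- mset_seq x) F Y = \sum_k x k * F (f k).
Proof.
rewrite big_flatten big_map; apply: eq_bigr => k _.
by rewrite big_nseq iter_addn_0 mulnC.
Qed.

Lemma count_mset_seq x (p : pred T) :
  count p (mset_seq x) = \sum_k x k * p (f k).
Proof.
rewrite -sum1_count big_mkcond (big_mset_seq x (fun Y => if p Y then 1 else 0)).
by apply: eq_bigr => k _; case: (p (f k)).
Qed.

Lemma mem_mset_seq x : (forall k, 0 < x k) -> mset_seq x =i codom f.
Proof.
move=> x_pos Y; apply/flatten_mapP/codomP => [[k _]|[k ->]].
  by rewrite mem_nseq => /andP[_ /eqP ->]; exists k.
by exists k; rewrite ?mem_index_enum // mem_nseq x_pos eqxx.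
Qed.

End MultisetSeq.

Section Forests.
Variable n : nat.

Lemma sph_forest (s : seq (tree n)) (i : 'I_(size s)) r t (w : Dom n) :
  sph (A := forest s) r t (i, w) =
  sph (A := forest [:: nth set0 s i]) r t (ord0, w).
Proof.
pose phi (p : sV (forest [:: nth set0 s i])) : sV (forest s) := (i, p.2).
rewrite -[RHS](@sph_emb _ _ phi) //.
- by move=> [j w1] [k w2] [/= <-]; rewrite !ord1.
- by move=> [j w1] [k w2] /=; rewrite !ord1 !eqxx.
- by move=> [j w1] [k w2] /=; rewrite !ord1 !eqxx.
- by move=> [j w1] /=; rewrite ord1.
- move=> [j w1] [k w2] /andP[_] /or4P H.
  have <- : i = k by case: H => /andP[/eqP].
  by apply/codomP; exists (j, w2).
Qed.

Definition tree_count r t (T : tree n) : nat :=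
  #|[set w : Dom n | sph (A := forest [:: T]) r t (ord0, w)]|.

Lemma bcount_forest (s : seq (tree n)) r t :
  bcount (forest s) r t = \sum_(T <- s) tree_count r t T.
Proof.
rewrite /bcount /tree_count (big_nth set0) big_mkord.
under eq_bigr do rewrite -sum1_card big_mkcond /=.
rewrite pair_big -sum1_card big_mkcond /=.
by apply: eq_bigr => -[i w] _; rewrite !inE sph_forest.
Qed.

Definition tree_weight (l : seq (nat * (nat * otype))) (T : tree n) : nat :=
  \sum_(p <- l) p.1 * tree_count p.2.1 p.2.2 T.

Lemma lterm_val_forest b0 l (s : seq (tree n)) :
  lterm_val (forest s) (LSum b0 l) = ((\sum_(T <- s) tree_weight l T)%:Z - b0%:Z)%R.
Proof.
rewrite /= /tree_weight exchange_big /=; congr (_%:Z - _)%R.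
by apply: eq_bigr => p _; rewrite bcount_forest big_distrr.
Qed.

Lemma lterm_val_mset b0 l m (f : 'I_m -> tree n) (x : 'I_m -> nat) :
  lterm_val (forest (mset_seq f x)) (LSum b0 l) =
  ((dotn (tree_weight l \o f) x)%:Z - b0%:Z)%R.
Proof.
rewrite lterm_val_forest big_mset_seq /dotn.
by congr ((_ : nat)%:Z - _)%R; apply: eq_bigr => k _; rewrite mulnC.
Qed.

End Forests.

Section MarkedTrees.
Variable n : nat.

Lemma nil_in_words_le L : [::] \in words_le L.
Proof. by rewrite /words_le; case: L => [|L] /=; rewrite ?mem_cat inE eqxx. Qed.

Definition eps_word : Dom n := SeqSub (nil_in_words_le (2 ^ n)).

Lemma nil_wordsE : [set w : Dom n | ssval w == [::]] = [set eps_word].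
Proof. by apply/setP => w; rewrite !inE -val_eqE. Qed.

Lemma markedE (X : tree n) : marked X = (eps_word \in X).
Proof.
apply/existsP/idP => [[w /andP[wX w_nil]]|epsX]; last by exists eps_word; rewrite epsX.
by have /set1P <- : w \in [set eps_word] by rewrite -nil_wordsE inE.
Qed.

Lemma muE (X : tree n) : mu X = eps_word |: X.
Proof. by rewrite /mu nil_wordsE setUC. Qed.

Definition unmark (X : tree n) : tree n := X :\ eps_word.

Lemma mu_marked (X : tree n) : marked (mu X).
Proof. by rewrite markedE muE setU11. Qed.

Lemma unmark_unmarked (X : tree n) : ~~ marked (unmark X).
Proof. by rewrite markedE setD11. Qed.

Lemma mu_unmark (X : tree n) : marked X -> mu (unmark X) = X.
Proof. by rewrite markedE muE => /setD1K. Qed.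

End MarkedTrees.

Fixpoint Ex_atoms (h : hnf) : seq lterm :=
  match h with
  | HAtom (AR _) => [::]
  | HAtom (AEx t) => [:: t]
  | HNot h' => Ex_atoms h'
  | HOr h1 h2 => Ex_atoms h1 ++ Ex_atoms h2
  end.

Lemma hnf_sat_congr (R : nat -> Prop) (A1 A2 : sstruct) (h : hnf) :
  {in R_atoms h, forall t, inR R (lterm_val A1 t) <-> inR R (lterm_val A2 t)} ->
  {in Ex_atoms h, forall t, (0 < lterm_val A1 t)%R = (0 < lterm_val A2 t)%R} ->
  hnf_sat R A1 h <-> hnf_sat R A2 h.
Proof.
elim: h => [[t|t]|h IH|h1 IH1 h2 IH2] /= R_agree Ex_agree.
- by apply: R_agree; rewrite mem_seq1.
- by rewrite Ex_agree ?mem_seq1.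
- by have := IH R_agree Ex_agree; tauto.
- have in_l s1 s2 (t : lterm) : t \in s1 -> t \in s1 ++ s2.
    by rewrite mem_cat => ->.
  have in_r s1 s2 (t : lterm) : t \in s2 -> t \in s1 ++ s2.
    by rewrite mem_cat orbC => ->.
  have := IH1 (fun t => R_agree t \o in_l _ _ t) (fun t => Ex_agree t \o in_l _ _ t).
  have := IH2 (fun t => R_agree t \o in_r _ _ t) (fun t => Ex_agree t \o in_r _ _ t).
  tauto.
Qed.

Lemma dotn_gt s (a x : 'I_s -> nat) b :
  (forall k, b < x k) -> (b < dotn a x) = [exists k, 0 < a k].
Proof.
move=> x_big; have [/existsP[k a_pos]|/existsPn a_zero] := boolP [exists k, 0 < a k].
  apply: leq_trans (x_big k) _; rewrite /dotn (bigD1 k) //=.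
  by apply: leq_trans (leq_addr _ _); rewrite leq_pmull.
by rewrite /dotn big1 // => k _; move: (a_zero k); rewrite lt0n negbK => /eqP ->.
Qed.

Definition lterm_weight n (t : lterm) : tree n -> nat :=
  if t is LSum _ l then tree_weight l else fun=> 0.

Definition lterm_offset (t : lterm) : nat := if t is LSum b0 _ then b0 else 0.

Definition counter_for n (B : {set tree n}) (t : lterm) : bool :=
  if t is LSum 0 l then
    [forall T : tree n, ~~ marked T ==> (tree_weight l T == (mu T \in B))]
  else false.

Lemma counter_for_inj n (B B' : {set tree n}) t :
  B \subset [set X | marked X] -> B' \subset [set X | marked X] ->
  counter_for B t -> counter_for B' t -> B = B'.
Proof.
move=> /subsetP B_marked /subsetP B'_marked.
case: t => [//|[|//] l] /forallP counts_B /forallP counts_B'.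
apply/setP => X; have [X_marked|X_unmarked] := boolP (marked X).
  move: (counts_B (unmark X)) (counts_B' (unmark X)).
  rewrite unmark_unmarked mu_unmark //= => /eqP -> /eqP.
  by case: (X \in B); case: (X \in B').
have notin (C : {set tree n}) : {subset C <= [set X | marked X]} -> X \notin C.
  by move=> C_marked; apply: contra X_unmarked => /C_marked; rewrite inE.
by rewrite (negbTE (notin _ B_marked)) (negbTE (notin _ B'_marked)).
Qed.

Section CounterExists.
Variables (R : nat -> Prop) (n : nat) (psi : hnf) (B : {set tree n}).
Hypotheses (R_rich : rich R)
  (psi_defines_PR : forall s : seq (tree n), hnf_sat R (forest s) psi <-> P_R R s)
  (B_neq0 : B != set0) (B_marked : B \subset [set X | marked X]).

Let S := [set X : tree n | (X \in B) || ~~ marked X].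
Let tv : 'I_#|S| -> tree n := enum_val.
Let ts := R_atoms psi.
Let a0 k : nat := ~~ marked (tv k) && (mu (tv k) \in B).
Let a (i : 'I_(size ts)) k := lterm_weight (nth (LConst 0) ts i) (tv k).
Let c (i : 'I_(size ts)) := lterm_offset (nth (LConst 0) ts i).
(* Larger than the offset of every P_exists-atom, so that these atoms do not
   depend on the multiplicities. *)
Let v := (\max_(t <- Ex_atoms psi) lterm_offset t).+1.

Lemma codom_tv : codom tv =i S.
Proof.
move=> X; apply/codomP/idP => [[k ->]|XS]; first exact: enum_valP.
by exists (enum_rank_in XS X); rewrite /tv enum_rankK_in.
Qed.

Lemma P_R_mset x : (forall k, 0 < x k) -> P_R R (mset_seq tv x) = R (dotn a0 x).
Proof.
move=> x_pos; rewrite /P_R count_mset_seq /dotn; congr R; apply: eq_bigr => k _.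
by rewrite [RHS]mulnC mem_mset_seq // codom_tv inE mu_marked orbF.
Qed.

Lemma a0_neq0 : exists k, a0 k != 0.
Proof.
have [X XB] := set0Pn _ B_neq0.
have X_marked : marked X by move: (subsetP B_marked X XB); rewrite inE.
have /codomP[k tvk] : unmark X \in codom tv.
  by rewrite codom_tv inE unmark_unmarked orbT.
by exists k; rewrite /a0 -tvk unmark_unmarked mu_unmark // XB.
Qed.

Lemma R_atom_neq_PR_form :
  ~~ has (counter_for B) ts -> forall i, ~ ((forall k, a i k = a0 k) /\ c i = 0).
Proof.
move=> /hasPn no_counter i [a_eq c_eq0].
apply: (negP (no_counter _ (mem_nth (LConst 0) (ltn_ord i)))).
rewrite /a /c in a_eq c_eq0 *; case: (nth _ ts i) a_eq c_eq0 => [m|b0 l] a_eq /= c_eq0.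
  by have [k] := a0_neq0; rewrite -a_eq.
rewrite c_eq0; apply/forallP => T; apply/implyP => T_unmarked.
have /codomP[k tvk] : T \in codom tv by rewrite codom_tv inE T_unmarked orbT.
by have := a_eq k; rewrite /a0 /= -tvk T_unmarked => ->.
Qed.

Lemma psi_sat_mset_agree x y :
  (forall k, v <= x k /\ v <= y k) ->
  (forall i, inR R ((dotn (a i) x)%:Z - (c i)%:Z)%R <->
             inR R ((dotn (a i) y)%:Z - (c i)%:Z)%R) ->
  hnf_sat R (forest (mset_seq tv x)) psi <-> hnf_sat R (forest (mset_seq tv y)) psi.
Proof.
move=> xy_big R_agree.
apply: hnf_sat_congr => [[m|b0 l] t_in|[m|b0 l] t_in] //.
  have := R_agree (Ordinal (etrans (index_mem _ _) t_in)).
  by rewrite /a /c nth_index // !lterm_val_mset.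
have b0_lt_v : b0 < v by rewrite ltnS (leq_bigmax_seq (F := lterm_offset) _ t_in).
rewrite !lterm_val_mset !subr_gt0 !ltz_nat !dotn_gt // => k;
  by case: (xy_big k) => x_big y_big; apply: leq_trans b0_lt_v _.
Qed.

Lemma has_counter : has (counter_for B) (R_atoms psi).
Proof.
apply/contraT => no_counter.
have a0_le1 k : a0 k <= 1 by rewrite /a0; case: (_ && _).
have [x [y [xy_big [PR_differ R_agree]]]] :=
  R_rich v a0_le1 a0_neq0 (R_atom_neq_PR_form no_counter).
have x_pos k : 0 < x k by case: (xy_big k) => + _; apply: leq_trans.
have y_pos k : 0 < y k by case: (xy_big k) => _; apply: leq_trans.
move: (psi_sat_mset_agree xy_big R_agree).
move: (psi_defines_PR (mset_seq tv x)) (psi_defines_PR (mset_seq tv y)).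
rewrite !P_R_mset //; tauto.
Qed.

End CounterExists.

Lemma card_le_size_witness (T : finType) (U : eqType) (A : {set T}) (s : seq U)
    (P : T -> U -> bool) :
  {in A, forall x, has (P x) s} ->
  (forall x y u, x \in A -> y \in A -> P x u -> P y u -> x = y) ->
  #|A| <= size s.
Proof.
move=> has_P P_inj; case: s has_P => [|u0 s'] has_P.
  by rewrite leqn0 cards_eq0; apply: contraT => /set0Pn[x /has_P].
set s := u0 :: s'; pose W x := find (P x) s.
have W_inj : {in enum A &, injective W}.
  move=> x y; rewrite !mem_enum => xA yA Wxy.
  apply: (P_inj x y (nth u0 s (W x))) => //; first exact: nth_find (has_P x xA).
  by rewrite Wxy; apply: nth_find (has_P y yA).
rewrite cardE -(size_map W) -(size_iota 0 (size s)).
apply: uniq_leq_size; first by rewrite map_inj_in_uniq ?enum_uniq.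
by move=> _ /mapP[x xA ->]; rewrite mem_iota add0n -has_find has_P // -mem_enum.
Qed.

Theorem lemma6p5 (R : nat -> Prop) (n : nat) (psi : hnf) :
  rich R ->
  hnf_wf psi ->
  (forall s : seq (tree n), hnf_sat R (forest s) psi <-> P_R R s) ->
  #|[set B : {set tree n} | (B != set0) && (B \subset [set X | marked X])]|
    <= num_R_atoms psi.
Proof.
move=> R_rich _ psi_defines_PR; rewrite /num_R_atoms.
apply: (card_le_size_witness (P := @counter_for n)) => [B|B B' t].
  by rewrite inE has_undup => /andP[]; apply: has_counter psi_defines_PR.
by rewrite !inE => /andP[_ B_marked] /andP[_ B'_marked]; apply: counter_for_inj.
Qed.
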